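(* Let $N$ be a network (an unrooted, binary, level-1, semi-directed phylogenetic network, as defined in the context) with at least four leaves. Then $N$ contains an out leaf or a tree cherry.
   Context: A network is a finite connected graph with no self-loops or multiple edges, whose degree-1 vertices are the leaves (labelled by a leaf set $X$) and whose other vertices all have degree 3 (binary). Some edges are directed: a reticulation vertex is a vertex with exactly two incoming directed edges (its reticulation edges) and one further incident edge (its out edge), which is left undirected; the only directed edges are reticulation edges (semi-directed). The network is phylogenetic: there is a valid root location, i.e. an edge that can be subdivided by a new root vertex $\rho$ so that orienting every undirected edge away from $\rho$ gives an orientation consistent with the given directions of all reticulation edges (so every non-root vertex has in-degree 1 and out-degree 2, except reticulation vertices, which have in-degree 2 and out-degree 1). The network is level-1: every biconnected component contains at most one reticulation vertex. An out leaf is a leaf incident to the out edge of a reticulation vertex. A tree cherry is a subgraph consisting of a vertex $v$ and two leaves adjacent to $v$, which is separated from the rest of the network by deleting a cut edge incident to $v$ (a cut edge is an edge whose removal disconnects the graph). *)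

(* A network is given by a finite vertex type V, the
   (symmetric, irreflexive) adjacency relation [adj] of the underlying
   undirected graph, and a relation [dir] with [dir u v] meaning that the
   edge {u,v} is directed from u to v. All other edges are undirected. *)
From mathcomp Require Import all_boot.
Set Implicit Arguments. Unset Strict Implicit. Unset Printing Implicit Defensive.

Section Network.
Variables (V : finType) (adj dir : rel V).

Definition deg (v : V) : nat := #|[set w | adj v w]|.
Definition indeg (v : V) : nat := #|[set u | dir u v]|.

Definition leaf (v : V) : bool := deg v == 1.

(* reticulation vertex: exactly two incoming directed edges and one further
   incident edge (the out edge, required undirected in [semi_directed]) *)
Definition reticulation (v : V) : bool := (indeg v == 2) && (deg v == 3).

Definition simple_graph : Prop := symmetric adj /\ irreflexive adj.
Definition connected : Prop := forall x y : V, connect adj x y.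
Definition binary : Prop := forall v : V, (deg v == 1) || (deg v == 3).

Definition semi_directed : Prop :=
  [/\ forall u v, dir u v -> adj u v,
      forall u v, dir u v -> ~~ dir v u,
      forall u v, dir u v -> reticulation v
    & forall r w, reticulation r -> adj r w -> ~~ dir w r -> ~~ dir r w].

(* The graph obtained by subdividing the edge {a,b} with a new root
   vertex rho = None. *)
Definition subdiv_edge (a b : V) : rel (option V) :=
  fun x y =>
    match x, y with
    | Some u, Some v => adj u v && ~~ (((u == a) && (v == b)) || ((u == b) && (v == a)))
    | None, Some v => (v == a) || (v == b)
    | Some u, None => (u == a) || (u == b)
    | None, None => false
    end.

(* [o] orients the subdivided graph away from rho, consistently with the
   given directions of the reticulation edges: it is an orientation of every
   edge, agrees with [dir], is acyclic, rho has in-degree 0, reticulations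
   in-degree 2 and all other vertices in-degree 1. *)
Definition rooted_orientation (a b : V) (o : rel (option V)) : Prop :=
  [/\ forall x y, o x y -> subdiv_edge a b x y,
      forall x y, subdiv_edge a b x y -> o x y (+) o y x,
      forall u v, dir u v -> subdiv_edge a b (Some u) (Some v) -> o (Some u) (Some v)
    & forall x y, o x y -> ~~ connect o y x] /\
  #|[set y | o y None]| = 0 /\
  (forall v, #|[set y | o y (Some v)]| = (if reticulation v then 2 else 1)).

Definition has_valid_root : Prop :=
  exists a b, adj a b /\ exists o : rel (option V), rooted_orientation a b o.

Definition induced_connected (S : {set V}) : Prop :=
  forall x y, x \in S -> y \in S ->
    connect [rel u v | [&& adj u v, u \in S & v \in S]] x y.
Definition nonseparable (S : {set V}) : Prop :=
  induced_connected S /\ forall z, z \in S -> induced_connected (S :\ z).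
Definition biconnected_component (S : {set V}) : Prop :=
  nonseparable S /\ forall S' : {set V}, S \subset S' -> nonseparable S' -> S' = S.

Definition level1 : Prop :=
  forall S, biconnected_component S -> #|[set r in S | reticulation r]| <= 1.

Definition network : Prop :=
  [/\ simple_graph, connected, binary, semi_directed & has_valid_root] /\ level1.

Definition has_out_leaf : Prop :=
  exists r l, [/\ reticulation r, leaf l, adj r l & ~~ dir l r].

Definition cut_edge (u v : V) : Prop :=
  adj u v /\
  ~~ connect [rel x y | adj x y && ~~ (((x == u) && (y == v)) || ((x == v) && (y == u)))] u v.

Definition has_tree_cherry : Prop :=
  exists v l1 l2 w,
    [/\ leaf l1, leaf l2, l1 != l2, adj v l1 & adj v l2] /\
    cut_edge v w /\
      ([set x | connect [rel x y | adj x y &&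
            ~~ (((x == v) && (y == w)) || ((x == w) && (y == v)))] v x]
        = [set v; l1; l2]).

End Network.

From mathcomp Require Import all_boot.

Set Implicit Arguments. Unset Strict Implicit. Unset Printing Implicit Defensive.

(* Orient the network away from a valid root. Among the non-leaf vertices
   choose v with the fewest vertices reachable from it; by acyclicity every
   child of v is a leaf. As v has degree 3 and in-degree 2 or 1 according to
   whether it is a reticulation, it has one or two children. A reticulation
   with a leaf child yields an out leaf; a tree vertex with two leaf children
   is a tree cherry, cut off by the edge to its third neighbour. *)

Section Orientation.
Variables (T : finType) (g o : rel T).

Lemma card_reach_lt x y :
  (forall x y, o x y -> ~~ connect o y x) -> o x y ->
  #|[set z | connect o y z]| < #|[set z | connect o x z]|.
Proof.
move=> o_acyc oxy; apply: proper_card; apply/properP; split.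
  by apply/subsetP => z; rewrite !inE; apply: connect_trans (connect1 oxy).
by exists x; rewrite !inE ?connect0 //; apply: o_acyc.
Qed.

Hypotheses (g_sym : symmetric g) (o_sub : subrel o g)
  (o_orient : forall x y, g x y -> o x y (+) o y x).

Lemma card_nbrs_in_out x :
  #|[set y | g x y]| = #|[set y | o y x]| + #|[set y | o x y]|.
Proof.
have -> : [set y | g x y] = [set y | o y x] :|: [set y | o x y].
  apply/setP => y; rewrite !inE.
  apply/idP/orP => [/o_orient | [/o_sub | /o_sub] //].
    by case: (o x y); case: (o y x) => //= _; [right | left].
  by rewrite g_sym.
rewrite cardsU; have -> : [set y | o y x] :&: [set y | o x y] = set0.
  apply/setP => y; rewrite !inE; apply/negbTE/andP => -[oyx oxy].
  by move: (o_orient (o_sub oxy)); rewrite oxy oyx.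
by rewrite cards0 subn0.
Qed.

End Orientation.

Section SimpleGraph.
Variables (V : finType) (adj : rel V).
Hypotheses (adj_sym : symmetric adj) (adj_irr : irreflexive adj).

Lemma leaf_nbr_uniq l v w : leaf adj l -> adj l v -> adj l w -> w = v.
Proof.
move=> /cards1P[z Nl] lv lw.
have : v \in [set x | adj l x] by rewrite inE.
have : w \in [set x | adj l x] by rewrite inE.
by rewrite Nl !inE => /eqP-> /eqP->.
Qed.

Lemma exists_nonleaf :
  connected adj -> 2 < #|[set x | leaf adj x]| -> exists u, ~~ leaf adj u.
Proof.
move=> conn leaves3; case: (pickP (fun u => ~~ leaf adj u)) => [u nlu | all_leaves].
  by exists u.
have /card_gt0P[x] := ltnW (ltnW leaves3); rewrite inE => lx.
have /card_gt0P[y] : 0 < deg adj x by move: lx => /eqP->.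
rewrite inE => xy; have ly : leaf adj y by apply/negbFE/all_leaves.
have clxy : closed adj [set x; y].
  apply: (intro_closed (sym_connect_sym adj_sym)) => u w uw.
  rewrite !inE => /orP[] /eqP Eu; subst u.
    by rewrite (leaf_nbr_uniq lx xy uw) eqxx orbT.
  by rewrite (leaf_nbr_uniq (v := x) ly _ uw) ?eqxx // adj_sym.
have /subset_leq_card : [set x | leaf adj x] \subset [set x; y].
  by apply/subsetP => z _; rewrite -(closed_connect clxy (conn x z)) !inE eqxx.
by rewrite cards2 => /(leq_trans leaves3); case: (x != y).
Qed.

Definition del_edge (u v : V) : rel V :=
  [rel x y | adj x y && ~~ (((x == u) && (y == v)) || ((x == v) && (y == u)))].

Lemma del_edge_sym u v : symmetric (del_edge u v).
Proof.
move=> x y; rewrite /del_edge /= adj_sym.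
by case: (x == u); case: (x == v); case: (y == u); case: (y == v).
Qed.

Lemma third_nbr v l1 l2 :
  deg adj v = 3 -> adj v l1 -> adj v l2 -> l1 != l2 ->
  exists w, [/\ w != l1, w != l2 & [set x | adj v x] = [set l1; l2; w]].
Proof.
move=> deg3 vl1 vl2 l12.
have sub12 : [set l1; l2] \subset [set x | adj v x].
  by apply/subsetP => z; rewrite !inE => /orP[] /eqP->.
have /card_gt0P[w] : 0 < #|[set x | adj v x] :\: [set l1; l2]|.
  by rewrite cardsD (setIidPr sub12) cards2 l12; move: deg3; rewrite /deg => ->.
rewrite !inE negb_or => /andP[/andP[wl1 wl2] vw]; exists w; split=> //.
apply/esym/eqP; rewrite eqEcard; apply/andP; split.
  by apply/subsetP => z; rewrite !inE => /orP[/orP[]|] /eqP->.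
rewrite [[set l1; l2; w]]setUC cardsU1 cards2 l12 !inE negb_or wl1 wl2.
by move: deg3; rewrite /deg => ->.
Qed.

Lemma del_edge_component v l1 l2 w :
  leaf adj l1 -> leaf adj l2 -> w != l1 -> w != l2 ->
  [set x | adj v x] = [set l1; l2; w] ->
  [set x | connect (del_edge v w) v x] = [set v; l1; l2].
Proof.
move=> L1 L2 wl1 wl2 Nv.
have nbr_v x : adj v x = [|| x == l1, x == l2 | x == w].
  by have /setP/(_ x) := Nv; rewrite !inE -orbA.
have vw : v != w.
  by apply/eqP => Evw; move: (adj_irr v); rewrite {2}Evw nbr_v eqxx !orbT.
have del_vl1 : del_edge v w v l1.
  by rewrite /del_edge /= nbr_v eqxx /= eqxx (eq_sym l1) (negbTE wl1) (negbTE vw).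
have del_vl2 : del_edge v w v l2.
  by rewrite /del_edge /= nbr_v eqxx orbT /= eqxx (eq_sym l2) (negbTE wl2) (negbTE vw).
have cl : closed (del_edge v w) [set v; l1; l2].
  apply: (intro_closed (sym_connect_sym (@del_edge_sym v w))) => x y /andP[xy nvw].
  rewrite !inE -orbA => /orP[/eqP Ex | /orP[] /eqP Ex]; subst x.
  - move: xy nvw; rewrite nbr_v eqxx /= => /or3P[| |/eqP->]; rewrite ?eqxx //.
    + by move=> -> _; rewrite orbT.
    + by move=> -> _; rewrite !orbT.
  - by rewrite (leaf_nbr_uniq (v := v) L1 _ xy) ?eqxx // adj_sym nbr_v eqxx.
  - by rewrite (leaf_nbr_uniq (v := v) L2 _ xy) ?eqxx // adj_sym nbr_v eqxx orbT.
apply/setP => z; rewrite inE; apply/idP/idP => [vz | ].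
  by rewrite -(closed_connect cl vz) !inE eqxx.
rewrite !inE -orbA => /or3P[] /eqP->; rewrite ?connect0 //; exact: connect1.
Qed.

Lemma deg3_two_leaves_tree_cherry v l1 l2 :
  deg adj v = 3 -> adj v l1 -> adj v l2 -> leaf adj l1 -> leaf adj l2 -> l1 != l2 ->
  has_tree_cherry adj.
Proof.
move=> deg3 vl1 vl2 L1 L2 l12.
have [w [wl1 wl2 Nv]] := third_nbr deg3 vl1 vl2 l12.
have comp := del_edge_component L1 L2 wl1 wl2 Nv.
have vw : adj v w by have /setP/(_ w) := Nv; rewrite !inE eqxx orbT.
have wv : w != v by apply: contraTneq vw => ->; rewrite adj_irr.
have cut : ~~ connect (del_edge v w) v w.
  have : w \notin [set v; l1; l2] by rewrite !inE (negbTE wv) (negbTE wl1) (negbTE wl2).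
  by rewrite -comp inE.
by exists v, l1, l2, w.
Qed.

Lemma subdiv_edge_sym a b : symmetric (subdiv_edge adj a b).
Proof.
case=> [u|] [v|] //=; rewrite adj_sym.
by case: (u == a); case: (u == b); case: (v == a); case: (v == b).
Qed.

Lemma card_subdiv_nbrs a b v : adj a b ->
  #|[set y | subdiv_edge adj a b (Some v) y]| = deg adj v.
Proof.
move=> ab.
pose f w := if ((v == a) && (w == b)) || ((v == b) && (w == a)) then None else Some w.
have -> : [set y | subdiv_edge adj a b (Some v) y] = f @: [set w | adj v w].
  apply/setP => -[w|]; rewrite inE /=; apply/idP/imsetP.
  - by case/andP=> vw nab; exists w; rewrite ?inE // /f (negbTE nab).
  - case=> w'; rewrite inE /f => vw'.
    by case: ifP => // nab [->]; rewrite vw' nab.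
  - by case/orP=> /eqP ?; subst v; [exists b | exists a];
      rewrite ?inE /f ?eqxx ?orbT // adj_sym.
  - case=> w' _; rewrite /f.
    by case: ifP => // /orP[] /andP[/eqP-> _] _; rewrite eqxx ?orbT.
have nab : a != b by apply: contraTneq ab => ->; rewrite adj_irr.
rewrite card_in_imset // => w1 w2 _ _; rewrite /f.
case: ifP => [E1|_]; case: ifP => [E2|_] //; last by case.
move: E1 E2 => /orP[] /andP[/eqP Ev1 /eqP Ew1] /orP[] /andP[/eqP Ev2 /eqP Ew2];
  by subst; rewrite ?eqxx in nab.
Qed.

End SimpleGraph.

Section RootedOrientation.
Variables (V : finType) (adj dir : rel V) (a b : V) (o : rel (option V)).
Hypotheses (adj_sym : symmetric adj) (adj_irr : irreflexive adj) (ab : adj a b).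
Hypothesis o_rooted : rooted_orientation adj dir a b o.

Lemma deg_eq_in_out v :
  deg adj v = (if reticulation adj dir v then 2 else 1) + #|[set y | o (Some v) y]|.
Proof.
case: o_rooted => [[o_sub o_orient _ _] [_ o_in]].
rewrite -(card_subdiv_nbrs adj_sym adj_irr v ab) -o_in.
exact: card_nbrs_in_out (subdiv_edge_sym adj_sym a b) o_sub o_orient (Some v).
Qed.

Lemma child_adj v l : o (Some v) (Some l) -> adj v l.
Proof. by case: o_rooted => [[o_sub _ _ _] _] /o_sub /andP[]. Qed.

Lemma child_not_dir v l : o (Some v) (Some l) -> ~~ dir l v.
Proof.
case: o_rooted => [[o_sub _ o_dir o_acyc] _] ovl; apply/negP => dlv.
have /negP := o_acyc _ _ ovl; apply; apply/connect1/o_dir => //.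
by rewrite subdiv_edge_sym //; apply: o_sub.
Qed.

Lemma lowest_nonleaf u : ~~ leaf adj u ->
  exists2 v, ~~ leaf adj v &
    forall y, o (Some v) y -> exists2 l, y = Some l & leaf adj l.
Proof.
case: o_rooted => [[_ _ _ o_acyc] [o_root _]] nlu.
pose reach v := #|[set y | connect o (Some v) y]|.
have [v nlv v_min] := @arg_minnP _ u (fun v => ~~ leaf adj v) reach nlu.
exists v => // -[l|] ovy; last first.
  by have /setP/(_ (Some v)) := cards0_eq o_root; rewrite !inE ovy.
exists l => //; apply/negPn/negP => /v_min.
by rewrite leqNgt (card_reach_lt o_acyc ovy).
Qed.

End RootedOrientation.

Theorem lemma1 (V : finType) (adj dir : rel V) :
  network adj dir -> 4 <= #|[set x | leaf adj x]| ->
  has_out_leaf adj dir \/ has_tree_cherry adj.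
Proof.
move=> [[[adj_sym adj_irr] conn bin _ [a [b [ab [o o_rooted]]]]] _] leaves4.
have [u nlu] := exists_nonleaf adj_sym conn (leq_trans (isT : 2 < 4) leaves4).
have [v nlv leaf_child] := lowest_nonleaf o_rooted nlu.
have deg3 : deg adj v = 3 by move: (bin v) nlv; rewrite /leaf => /orP[->|/eqP->].
have := deg_eq_in_out adj_sym adj_irr ab o_rooted v; rewrite deg3.
case: ifP => [retic | _] children.
  left; have /card_gt0P[y] : 0 < #|[set y | o (Some v) y]|.
    by rewrite -(ltn_add2l 2) -children.
  rewrite inE => ovy; have [l El ll] := leaf_child y ovy; subst y.
  exists v, l; split=> //; first exact: (child_adj o_rooted ovy).
  exact: (child_not_dir adj_sym o_rooted ovy).
right; have /card_gt1P[y1 [y2 []]] : 1 < #|[set y | o (Some v) y]|.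
  by rewrite -(ltn_add2l 1) -children.
rewrite !inE => ovy1 ovy2 y12.
have [l1 E1 ll1] := leaf_child y1 ovy1; have [l2 E2 ll2] := leaf_child y2 ovy2; subst.
apply: (deg3_two_leaves_tree_cherry adj_sym adj_irr deg3
         (child_adj o_rooted ovy1) (child_adj o_rooted ovy2) ll1 ll2).
by apply: contraNneq y12 => ->.
Qed.
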